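(* For every odd $q\geq 3$, the generalized Farey map $F_q\colon[0,1]\to[0,1]$ is topologically mixing: for all nonempty open sets $B_1,B_2\subseteq[0,1]$ there is $N\in\mathbb{N}$ such that $F_q^{n}(B_1)\cap B_2\neq\emptyset$ for all $n\geq N$.
   Context: Let $q\geq 3$ be odd and $\lambda=2\cos(\pi/q)$. Elements of $\mathrm{PGL}_2(\mathbb{R})$ act on $\mathbb{R}\cup\{\infty\}$ by $\begin{bmatrix}a&b\\c&d\end{bmatrix}.x=(ax+b)/(cx+d)$. Put $s(x)=\sin(x\pi/q)/\sin(\pi/q)$, $g_k=\begin{bmatrix}s(k)&-s(k+1)\\-s(k-1)&s(k)\end{bmatrix}$, $Q=\begin{bmatrix}0&1\\1&0\end{bmatrix}$, $K=\{(q+1)/2,\dots,q-1\}$. The generalized Farey map $F_q\colon[0,1]\to[0,1]$ is defined, for $k\in K$, by $F_q(x)=g_k.x$ for $x\in[g_k^{-1}.0,g_k^{-1}.1]$ and $F_q(x)=Qg_k.x$ for $x\in[(Qg_k)^{-1}.1,(Qg_k)^{-1}.0]$ (these intervals cover $[0,1]$, overlap only at endpoints, and the definitions agree there). *)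

From mathcomp Require Import all_boot all_order all_algebra.
From mathcomp Require Import all_classical all_reals all_analysis.
Set Implicit Arguments. Unset Strict Implicit. Unset Printing Implicit Defensive.
Import Order.TTheory GRing.Theory Num.Theory numFieldNormedType.Exports.
Local Open Scope ring_scope.
Local Open Scope classical_set_scope.

Section Farey.
Variable R : realType.
Variable q : nat.

Definition sq (x : R) : R := sin (x * pi / q%:R) / sin (pi / q%:R).

(* A 2x2 matrix [a b; c d] as a quadruple; its action x |-> (a x + b)/(c x + d). *)
Definition mob (m : R * R * R * R) (x : R) : R :=
  let: (a, b, c, d) := m in (a * x + b) / (c * x + d).

(* inverse in PGL_2 (adjugate) *)
Definition minv (m : R * R * R * R) : R * R * R * R :=
  let: (a, b, c, d) := m in (d, - b, - c, a).

Definition gk (k : nat) : R * R * R * R :=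
  (sq k%:R, - sq k.+1%:R, - sq (k%:R - 1), sq k%:R).

(* Q g for Q = [0 1; 1 0] *)
Definition Qm (m : R * R * R * R) : R * R * R * R :=
  let: (a, b, c, d) := m in (c, d, a, b).

Definition Kset : seq nat := iota (q.+1 %/ 2) (q.-1 - q.+1 %/ 2).+1.

Definition branch (x : R) (k : nat) : option R :=
  let g := gk k in
  if (mob (minv g) 0 <= x <= mob (minv g) 1) then Some (mob g x)
  else if (mob (minv (Qm g)) 1 <= x <= mob (minv (Qm g)) 0) then Some (mob (Qm g) x)
  else None.

(* The generalized Farey map F_q (value 0 off its domain [0,1];
   at shared endpoints the first matching branch is used, the branches agree there). *)
Definition Fq (x : R) : R :=
  if (0 <= x <= 1) then
    foldr (fun k acc => match branch x k with Some y => y | None => acc end) 0 Kset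
  else 0.

End Farey.

Definition open_in_unit (R : realType) (B : set R) : Prop :=
  exists U : set R, open U /\ B = U `&` `[0, 1]%classic.

(* On [[0, 1]], [F_q] consists of [q - 1] full branches: on each piece it is a
   Moebius map of determinant [+-1] whose denominator lies in [(0, 1]], has
   coefficient of modulus [>= 1] in [x] and maps the piece onto [[0, 1]].  Such
   a map expands distances: [|F y - F x| >= (y - x) (1 + (y - x))].  So an
   interval inside one piece grows by at least the square of its length, and
   keeps touching [0] or [1] if it did; an interval meeting two pieces but
   containing neither has a half, ending at a cut, whose image touches [0] or
   [1].  Hence a touching interval grows until it covers a piece, and any
   interval eventually becomes touching or covers a piece; either way some
   iterate maps it onto [[0, 1]], and then so do all later ones.  Since every
   nonempty relatively open set contains an interval, [F_q] is mixing. *)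
From mathcomp Require Import all_boot all_order all_algebra.
From mathcomp Require Import all_classical all_reals all_analysis.
From mathcomp Require Import ring lra zify.
Import Order.TTheory GRing.Theory Num.Theory numFieldNormedType.Exports.
Set Implicit Arguments. Unset Strict Implicit. Unset Printing Implicit Defensive.
Local Open Scope ring_scope.
Local Open Scope classical_set_scope.

Lemma open_in_unit_interval (R : realType) (B : set R) x : open_in_unit B -> B x ->
  exists a b, [/\ 0 <= a, a < b, b <= 1 & forall z, a <= z <= b -> B z].
Proof.
move=> [U [oU ->]] [Ux]; rewrite /= in_itv /= => /andP[x0 x1].
have /nbhs_ballP[e /= e0 ballU] := oU x Ux.
pose r := Num.min (e / 2) (1 / 2).
have r0 : 0 < r by rewrite lt_min; apply/andP; split; lra.
have r_half : r <= 1 / 2 by rewrite ge_min lexx orbT.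
have r_e : r < e by rewrite gt_min; apply/orP; left; lra.
have nearU z : x - r <= z <= x + r -> U z.
  move=> /andP[z1 z2]; apply: ballU; rewrite -ball_normE /ball_ /=.
  have : `|x - z| <= r by rewrite ler_norml; apply/andP; split; lra.
  lra.
have [x_half|half_x] := leP x (1 / 2); [exists x, (x + r) | exists (x - r), x];
  (split; [lra | lra | lra | move=> z /andP[z1 z2]; split]);
  by [apply: nearU; apply/andP; split; lra | rewrite /= in_itv /=; apply/andP; split; lra].
Qed.

Section PiecewiseExpanding.
Variables (R : realType) (F : R -> R) (M : nat) (t : nat -> R).
Hypothesis M_gt0 : (0 < M)%N.
Hypothesis t0 : t 0 = 0.
Hypothesis tM : t M = 1.
Hypothesis t_lt : forall {i}, (i < M)%N -> t i < t i.+1.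
Hypothesis F_expanding : forall {i}, (i < M)%N -> exists2 sg : R, sg = 1 \/ sg = -1 &
  forall x y, t i <= x -> x <= y -> y <= t i.+1 ->
    (y - x) * (1 + (y - x)) <= sg * (F y - F x).
Hypothesis F_ivt : forall {i}, (i < M)%N -> forall x y v, t i <= x -> x <= y -> y <= t i.+1 ->
  (F x <= v <= F y) \/ (F y <= v <= F x) -> exists2 z, x <= z <= y & F z = v.
Hypothesis F_t : forall {i}, (i <= M)%N -> F (t i) = 0 \/ F (t i) = 1.

Definition maps_onto (a b c d : R) :=
  forall v, c <= v <= d -> exists2 z, a <= z <= b & F z = v.

Definition iter_onto_unit (n : nat) (a b : R) :=
  forall v, 0 <= v <= 1 -> exists2 z, a <= z <= b & iter n F z = v.

Definition at_boundary (a b : R) := a = 0 \/ b = 1.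

Lemma t_le i j : (i <= j)%N -> (j <= M)%N -> t i <= t j.
Proof.
elim: j => [|j IH]; first by rewrite leqn0 => /eqP ->.
rewrite leq_eqVlt => /orP[/eqP -> //|ij] jM.
exact: le_trans (IH ij (ltnW jM)) (ltW (t_lt jM)).
Qed.

Lemma piece_of a : 0 <= a -> a < 1 -> exists i, [/\ (i < M)%N, t i <= a & a < t i.+1].
Proof.
move=> a0 a1.
suff H n : (n <= M)%N -> a < t n -> exists i, [/\ (i < n)%N, t i <= a & a < t i.+1].
  by have [|i [iM ? ?]] := H M (leqnn M); [rewrite tM | exists i].
elim: n => [|n IH] nM ltan; first by move: ltan; rewrite t0; lra.
have [lt_a_tn|le_tn_a] := ltP a (t n); last by exists n.
by have [i [? ? ?]] := IH (ltnW nM) lt_a_tn; exists i; split => //; apply: ltnW.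
Qed.

Lemma F_piece_unit i x : (i < M)%N -> t i <= x -> x <= t i.+1 -> 0 <= F x <= 1.
Proof.
move=> iM tix xti.
have [sg sgE expand] := F_expanding iM.
have from_ti := expand _ _ (lexx _) tix xti.
have to_ti1 := expand _ _ tix xti (lexx _).
have F_ti := F_t (ltnW iM); have F_ti1 := F_t iM.
have gl : 0 <= (x - t i) * (1 + (x - t i)) by apply: mulr_ge0; lra.
have gr : 0 <= (t i.+1 - x) * (1 + (t i.+1 - x)) by apply: mulr_ge0; lra.
by case: sgE => sgE; case: F_ti => E; case: F_ti1 => E';
  rewrite sgE E E' in from_ti to_ti1; apply/andP; split; lra.
Qed.

Lemma piece_image i a b : (i < M)%N -> t i <= a -> a <= b -> b <= t i.+1 ->
  exists c d, [/\ 0 <= c, d <= 1, (b - a) * (1 + (b - a)) <= d - c,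
    (c = F a /\ d = F b) \/ (c = F b /\ d = F a) & maps_onto a b c d].
Proof.
move=> iM tia ab bti.
have [sg sgE expand] := F_expanding iM.
have grow := expand _ _ tia ab bti.
have /andP[Fa0 Fa1] := F_piece_unit iM tia (le_trans ab bti).
have /andP[Fb0 Fb1] := F_piece_unit iM (le_trans tia ab) bti.
case: sgE grow => -> grow.
- exists (F a), (F b); split; [done | done | lra | by left |].
  by move=> v v_in; apply: (F_ivt iM) => //; left.
- exists (F b), (F a); split; [done | done | lra | by right |].
  by move=> v v_in; apply: (F_ivt iM) => //; right.
Qed.

Lemma piece_onto_unit i : (i < M)%N -> maps_onto (t i) (t i.+1) 0 1.
Proof.
move=> iM; have tlt := t_lt iM.
have [c [d [c0 d1 grow cdE onto]]] := piece_image iM (lexx _) (ltW tlt) (lexx _).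
suff [c0E d1E] : c = 0 /\ d = 1 by rewrite -c0E -d1E.
have : 0 < (t i.+1 - t i) * (1 + (t i.+1 - t i)) by apply: mulr_gt0; lra.
case: (F_t (ltnW iM)) => Fa; case: (F_t iM) => Fb; rewrite Fa Fb in cdE;
  by case: cdE => -[Ec Ed]; split; lra.
Qed.

Lemma maps_onto_widen a b a' b' c d :
  a' <= a -> b <= b' -> maps_onto a b c d -> maps_onto a' b' c d.
Proof.
move=> a'a bb' onto v /onto[z /andP[az zb] Fz]; exists z => //.
by apply/andP; split; lra.
Qed.

Lemma at_boundary_of_value c d u : 0 <= c -> c < d -> d <= 1 ->
  u = c \/ u = d -> u = 0 \/ u = 1 -> at_boundary c d.
Proof. by rewrite /at_boundary => c0 cd d1 [] -> []; lra. Qed.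

Lemma piece_step i a b : (i < M)%N -> t i <= a -> a < b -> b <= t i.+1 ->
  exists c d, [/\ 0 <= c, c < d, d <= 1, maps_onto a b c d &
    [/\ (b - a) * (1 + (b - a)) <= d - c,
        F a = 0 \/ F a = 1 -> at_boundary c d &
        F b = 0 \/ F b = 1 -> at_boundary c d]].
Proof.
move=> iM tia ab bti.
have [c [d [c0 d1 grow cdE onto]]] := piece_image iM tia (ltW ab) bti.
have pos : 0 < (b - a) * (1 + (b - a)) by apply: mulr_gt0; lra.
have cd : c < d by lra.
exists c, d; split=> //; split=> // F01; apply: at_boundary_of_value c0 cd d1 _ F01.
- by case: cdE => -[-> ->]; [left | right].
- by case: cdE => -[-> ->]; [right | left].
Qed.

Lemma within_piece_step i a b : (i < M)%N -> t i <= a -> a < b -> b <= t i.+1 ->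
  exists c d, [/\ 0 <= c, c < d, d <= 1, maps_onto a b c d &
    (b - a) * (1 + (b - a)) <= d - c /\ (at_boundary a b -> at_boundary c d)].
Proof.
move=> iM tia ab bti.
have [c [d [c0 cd d1 onto [grow bd_a bd_b]]]] := piece_step iM tia ab bti.
exists c, d; split=> //; split=> // -[a0|b1].
- by apply: bd_a; have := F_t (leq0n M); rewrite t0 -a0.
- by apply: bd_b; have := F_t (leqnn M); rewrite tM -b1.
Qed.

(* An interval meeting two consecutive pieces either contains one of them or
   has a half of at least half its length ending at the common breakpoint. *)
Lemma interval_step a b : 0 <= a -> a < b -> b <= 1 ->
  maps_onto a b 0 1 \/ exists c d, [/\ 0 <= c, c < d, d <= 1, maps_onto a b c d &
    (b - a) * (1 + (b - a)) <= d - c /\ (at_boundary a b -> at_boundary c d)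
    \/ [/\ at_boundary c d, (b - a) / 2 <= d - c & ~ at_boundary a b]].
Proof.
move=> a0 ab b1.
have [i [iM tia ati]] := piece_of a0 (lt_le_trans ab b1).
have [bti|tib] := leP b (t i.+1).
  have [c [d [? ? ? ? ?]]] := within_piece_step iM tia ab bti.
  by right; exists c, d; split=> //; left.
have i1M : (i.+1 < M)%N.
  rewrite ltn_neqAle iM andbT; apply/eqP => iE.
  by move: tib; rewrite iE tM; lra.
have [a_ti|ti_a] := leP a (t i).
  by left; apply: maps_onto_widen (piece_onto_unit iM); lra.
have [ti2_b|b_ti2] := leP (t i.+2) b.
  by left; apply: maps_onto_widen (piece_onto_unit i1M); lra.
have ti0 : 0 <= t i by rewrite -t0 t_le // ltnW.
have ti2 : t i.+2 <= 1 by rewrite -tM t_le.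
have inner : ~ at_boundary a b by rewrite /at_boundary; lra.
right.
have [long_left|long_right] := leP ((b - a) / 2) (t i.+1 - a).
- have [c [d [c0 cd d1 onto [grow _ bd]]]] := piece_step iM (ltW ti_a) ati (lexx _).
  exists c, d; split=> //; first by apply: maps_onto_widen onto; lra.
  right; split=> //; first exact: bd (F_t iM).
  have : t i.+1 - a <= (t i.+1 - a) * (1 + (t i.+1 - a)) by nra.
  lra.
- have [c [d [c0 cd d1 onto [grow bd _]]]] := piece_step i1M (lexx _) tib (ltW b_ti2).
  exists c, d; split=> //; first by apply: maps_onto_widen onto; lra.
  right; split=> //; first exact: bd (F_t iM).
  have : b - t i.+1 <= (b - t i.+1) * (1 + (b - t i.+1)) by nra.
  lra.
Qed.

Lemma iter_onto_unit_comp n a b c d :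
  maps_onto a b c d -> iter_onto_unit n c d -> iter_onto_unit n.+1 a b.
Proof.
move=> onto cover v /cover[w /onto[z zab Fz] Fw].
by exists z => //; rewrite iterSr Fz.
Qed.

Lemma iter_onto_unit1 a b : maps_onto a b 0 1 -> iter_onto_unit 1 a b.
Proof. by move=> onto; apply: iter_onto_unit_comp onto _ => v; exists v. Qed.

Lemma iter_onto_unitS n a b : iter_onto_unit n a b -> iter_onto_unit n.+1 a b.
Proof.
move=> cover v /(piece_onto_unit M_gt0)[w /andP[w0 w1] Fw].
have t1 : t 1 <= 1 by rewrite -tM t_le.
have [|z zab Fz] := cover w; first by rewrite t0 in w0; apply/andP; split; lra.
by exists z => //; rewrite iterS Fz.
Qed.

Lemma iter_onto_unit_le n m a b :
  (n <= m)%N -> iter_onto_unit n a b -> iter_onto_unit m a b.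
Proof.
elim: m => [|m IH]; first by rewrite leqn0 => /eqP ->.
by rewrite leq_eqVlt => /orP[/eqP -> //|nm] /(IH nm) /iter_onto_unitS.
Qed.

Lemma iter_onto_unit_by_growth (P : R -> R -> Prop) (g : R) : 0 < g ->
  (forall a b, P a b -> 0 <= b - a <= 1) ->
  (forall a b, P a b -> (exists n, iter_onto_unit n a b) \/
     exists c d, [/\ P c d, maps_onto a b c d & b - a + g <= d - c]) ->
  forall a b, P a b -> exists n, iter_onto_unit n a b.
Proof.
move=> g0 P_len P_step.
suff H m a b : P a b -> 1 - m%:R * g < b - a -> exists n, iter_onto_unit n a b.
  move=> a b Pab; apply: (H (Num.Def.archi_bound (1 / g))) => //.
  have := archi_boundP (ltW (divr_gt0 ltr01 g0)).
  rewrite ltr_pdivrMr //; have := P_len _ _ Pab; lra.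
elim: m a b => [|m IH] a b Pab; first by have := P_len _ _ Pab; rewrite mul0r; lra.
have [//|[c [d [Pcd onto grow]]] lenm] := P_step a b Pab.
have [|n cover] := IH c d Pcd; first by rewrite -natr1 in lenm; lra.
by exists n.+1; apply: iter_onto_unit_comp onto cover.
Qed.

Lemma boundary_interval_onto del a b : 0 < del ->
  0 <= a -> a < b -> b <= 1 -> at_boundary a b -> del <= b - a ->
  exists n, iter_onto_unit n a b.
Proof.
move=> del0 a0 ab b1 bd len.
apply: (@iter_onto_unit_by_growth
  (fun x y => [/\ 0 <= x, x < y, y <= 1, at_boundary x y & del <= y - x]) (del * del));
  [exact: mulr_gt0 | | | by split].
  by move=> x y [? ? ? _ _]; apply/andP; split; lra.
move=> x y [x0 xy y1 bdxy lenxy].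
have [onto|[c [d [c0 cd d1 onto [[grow keep]|[_ _ inner]]]]]] := interval_step x0 xy y1.
- by left; exists 1%N; exact: iter_onto_unit1.
- by right; exists c, d; split=> //; [split=> //; [exact: keep | nra] | nra].
- by case: inner.
Qed.

Lemma interval_onto a b : 0 <= a -> a < b -> b <= 1 -> exists n, iter_onto_unit n a b.
Proof.
move=> a0 ab b1; have del0 : 0 < b - a by lra.
apply: (@iter_onto_unit_by_growth
  (fun x y => [/\ 0 <= x, x < y, y <= 1 & b - a <= y - x]) ((b - a) * (b - a)));
  [exact: mulr_gt0 | | | by split].
  by move=> x y [? ? ? _]; apply/andP; split; lra.
move=> x y [x0 xy y1 lenxy].
have [onto|[c [d [c0 cd d1 onto [[grow _]|[bd half _]]]]]] := interval_step x0 xy y1.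
- by left; exists 1%N; exact: iter_onto_unit1.
- by right; exists c, d; split=> //; [split=> //; nra | nra].
- have half0 : 0 < (b - a) / 2 by lra.
  have [|n cover] := boundary_interval_onto half0 c0 cd d1 bd; first lra.
  by left; exists n.+1; apply: iter_onto_unit_comp onto cover.
Qed.

Lemma piecewise_expanding_mixing B1 B2 :
  open_in_unit B1 -> open_in_unit B2 -> B1 !=set0 -> B2 !=set0 ->
  exists N, forall n, (N <= n)%N -> (iter n F @` B1) `&` B2 !=set0.
Proof.
move=> oB1 oB2 [x B1x] [y B2y].
have [a [b [a0 ab b1 abB1]]] := open_in_unit_interval oB1 B1x.
have y01 : 0 <= y <= 1 by case: oB2 B2y => U [_ ->] [_]; rewrite /= in_itv.
have [N cover] := interval_onto a0 ab b1.
exists N => n Nn; have [z zab Fz] := iter_onto_unit_le Nn cover y01.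
by exists y; split => //; exists z => //; exact: abB1.
Qed.

End PiecewiseExpanding.

Section SinRatio.
Variables (R : realType) (q : nat).
Hypothesis q_gt1 : (1 < q)%N.

Let q_gt0 : 0 < q%:R :> R.
Proof. by rewrite ltr0n; lia. Qed.

Let theta := pi / q%:R :> R.

Let sin_theta_gt0 : 0 < sin theta.
Proof.
apply: sin_gt0_pi; apply/andP; split; first by apply: divr_gt0 => //; exact: pi_gt0.
rewrite /theta ltr_pdivrMr //; have := @pi_gt0 R.
have : 2%:R <= q%:R :> R by rewrite ler_nat.
nra.
Qed.

Lemma sq_cassini (x : R) : sq q x ^+ 2 - sq q (x + 1) * sq q (x - 1) = 1.
Proof.
rewrite /sq; set A := x * pi / q%:R.
have -> : (x + 1) * pi / q%:R = A + theta by rewrite /A /theta; ring.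
have -> : (x - 1) * pi / q%:R = A - theta by rewrite /A /theta; ring.
have sinDB : sin (A + theta) * sin (A - theta) = sin A ^+ 2 - sin theta ^+ 2.
  rewrite sinD sinB.
  transitivity ((sin A * cos theta) ^+ 2 - (cos A * sin theta) ^+ 2); first by ring.
  by rewrite !exprMn !cos2sin2; ring.
have sin_neq0 : sin theta != 0 by rewrite gt_eqF.
have -> : sin (A + theta) / sin theta * (sin (A - theta) / sin theta)
    = sin (A + theta) * sin (A - theta) / sin theta ^+ 2 by field.
by rewrite sinDB; field.
Qed.

Lemma sq_ge0 (x : R) : 0 <= x -> x <= q%:R -> 0 <= sq q x.
Proof.
move=> x0 xq; rewrite /sq; apply: divr_ge0; last exact: ltW.
apply: sin_ge0_pi; apply/andP; split.
  by apply: divr_ge0 => //; apply: mulr_ge0 => //; exact: ltW (@pi_gt0 R).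
by rewrite ler_pdivrMr //; have := @pi_gt0 R; nra.
Qed.

Lemma sq_ge1 (x : R) : 1 <= x -> x <= q%:R - 1 -> 1 <= sq q x.
Proof.
move=> x1 xq; have := sq_cassini x.
have : 0 <= sq q (x + 1) * sq q (x - 1) by apply: mulr_ge0; apply: sq_ge0; lra.
have : 0 <= sq q x by apply: sq_ge0; lra.
nra.
Qed.

Lemma sq_q : sq q (q%:R : R) = 0.
Proof. by rewrite /sq mulrAC divff ?gt_eqF // mul1r sinpi mul0r. Qed.

Lemma sq_sym (x : R) : sq q (q%:R - x) = sq q x.
Proof.
rewrite /sq; congr (_ / _).
have -> : (q%:R - x) * pi / q%:R = pi - x * pi / q%:R.
  by rewrite mulrBl mulrBl mulrAC divff ?gt_eqF // mul1r.
by rewrite sinB sinpi cospi; ring.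
Qed.

End SinRatio.

Section Mobius.
Variable R : realType.

(* [mob] has derivative [sg / (C x + D)^2]; for [|C| >= 1] and denominators in
   (0, 1], the product of the denominators at [x <= y] is at most [1 - (y - x)]. *)
Lemma mob_expansion (A B C D sg x y : R) : A * D - B * C = sg -> sg = 1 \/ sg = -1 ->
  1 <= `|C| -> 0 < C * x + D <= 1 -> 0 < C * y + D <= 1 -> x <= y ->
  (y - x) * (1 + (y - x)) <= sg * (mob (A, B, C, D) y - mob (A, B, C, D) x).
Proof.
move=> det sgE C1 /andP[lx0 lx1] /andP[ly0 ly1] xy /=.
set lx := C * x + D in lx0 lx1 *; set ly := C * y + D in ly0 ly1 *.
have -> : sg * ((A * y + B) / ly - (A * x + B) / lx) = (y - x) / (lx * ly).
  have sg2 : sg * sg = 1 by case: sgE => ->; ring.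
  have num : (A * y + B) * lx - (A * x + B) * ly = sg * (y - x).
    by rewrite -det /lx /ly; ring.
  have lx_neq0 : lx != 0 by rewrite gt_eqF.
  have ly_neq0 : ly != 0 by rewrite gt_eqF.
  have -> : sg * ((A * y + B) / ly - (A * x + B) / lx) =
      sg * ((A * y + B) * lx - (A * x + B) * ly) / (lx * ly) by field; apply/andP.
  by rewrite num mulrA sg2 mul1r.
have lxly0 : 0 < lx * ly by apply: mulr_gt0.
have lxly : lx * ly <= 1 - (y - x).
  have dl : ly - lx = C * (y - x) by rewrite /lx /ly; ring.
  have [C0|C0] := leP 0 C.
  - rewrite ger0_norm // in C1.
    have : (C - 1) * (y - x) >= 0 by apply: mulr_ge0; lra.
    have : lx * ly <= lx by rewrite ler_piMr //; lra.
    nra.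
  - rewrite ltr0_norm // in C1.
    have : (- C - 1) * (y - x) >= 0 by apply: mulr_ge0; lra.
    have : lx * ly <= ly by rewrite ler_piMl //; lra.
    nra.
rewrite ler_pdivlMr //.
have : (y - x) * (1 + (y - x)) * (lx * ly) <= (y - x) * (1 + (y - x)) * (1 - (y - x)).
  by apply: ler_wpM2l lxly; apply: mulr_ge0; lra.
have dxy : 0 <= y - x by lra.
have : 0 <= (y - x) * (y - x) * (y - x) by rewrite !mulr_ge0.
nra.
Qed.

Lemma mob_continuous (A B C D x y : R) :
  (forall z, x <= z <= y -> C * z + D != 0) ->
  {within `[x, y], continuous (mob (A, B, C, D))}.
Proof.
move=> den_neq0; apply: continuous_in_subspaceT => z.
rewrite inE /= in_itv /= => /den_neq0 den_z.
have affine a b : continuous (fun w : R => a * w + b).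
  move=> w; apply: continuousD; last exact: cst_continuous.
  by apply: continuousM; [exact: cst_continuous | exact: cvg_id].
change {for z, continuous ((fun w => A * w + B) \* (fun w => (C * w + D)^-1))}.
apply: continuousM; first exact: affine.
by apply: (continuousV (s := fun w => C * w + D)) => //; exact: affine.
Qed.

Lemma mob_ivt (A B C D x y v : R) : x <= y ->
  (forall z, x <= z <= y -> C * z + D != 0) ->
  (mob (A, B, C, D) x <= v <= mob (A, B, C, D) y) \/
  (mob (A, B, C, D) y <= v <= mob (A, B, C, D) x) ->
  exists2 z, x <= z <= y & mob (A, B, C, D) z = v.
Proof.
move=> xy den_neq0 v_between.
have v_in : Num.min (mob (A, B, C, D) x) (mob (A, B, C, D) y) <= v <=
    Num.max (mob (A, B, C, D) x) (mob (A, B, C, D) y).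
  by case: v_between => /andP[v1 v2]; rewrite ge_min le_max v1 v2 ?orbT.
have [z z_in <-] := IVT xy (mob_continuous (A := A) (B := B) den_neq0) v_in.
by exists z; rewrite // -in_itv.
Qed.

End Mobius.

(* The two branches [(be, -al, -ga, be)] and [(-ga, be, be, -al)] of [F_q] for one
   [k] in [K], where [al, be, ga] stand for [s(k+1), s(k), s(k-1)]. *)
Section BranchPair.
Variables (R : realType) (al be ga : R).
Hypothesis be_ge1 : 1 <= be.
Hypothesis ga_ge1 : 1 <= ga.
Hypothesis al_ge0 : 0 <= al.
Hypothesis det1 : be ^+ 2 - al * ga = 1.

Definition pair_cut := (be + al) / (ga + be).

Let gabe_gt0 : 0 < ga + be. Proof. by move: be_ge1 ga_ge1; lra. Qed.
Let be_gt0 : 0 < be. Proof. by move: be_ge1; lra. Qed.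
Let ga_gt0 : 0 < ga. Proof. by move: ga_ge1; lra. Qed.

Lemma lt_pair_cut : al / be < pair_cut.
Proof.
have -> : pair_cut = al / be + 1 / ((ga + be) * be).
  by rewrite /pair_cut -det1; field; apply/andP; split; rewrite gt_eqF.
by rewrite ltrDl divr_gt0 // mulr_gt0.
Qed.

Lemma pair_cut_lt : pair_cut < be / ga.
Proof.
have -> : pair_cut = be / ga - 1 / ((ga + be) * ga).
  by rewrite /pair_cut -det1; field; apply/andP; split; rewrite gt_eqF.
by rewrite gtrDl oppr_lt0 divr_gt0 // mulr_gt0.
Qed.

Lemma pair_denomL x : al / be <= x -> x <= pair_cut -> 0 < - ga * x + be <= 1.
Proof.
move: be_ge1 ga_ge1 al_ge0 det1 => ? ? ? ?.
rewrite ler_pdivrMr // /pair_cut ler_pdivlMr // => x_ge x_le.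
have : ga * (x * (ga + be)) <= ga * (be + al) by apply: ler_wpM2l; lra.
have : be * al <= be * (x * be) by apply: ler_wpM2l; lra.
by move=> *; apply/andP; split; nra.
Qed.

Lemma pair_denomR x : pair_cut <= x -> x <= be / ga -> 0 < be * x - al <= 1.
Proof.
move: be_ge1 ga_ge1 al_ge0 det1 => ? ? ? ?.
rewrite ler_pdivlMr // /pair_cut ler_pdivrMr // => x_ge x_le.
have : be * (be + al) <= be * (x * (ga + be)) by apply: ler_wpM2l; lra.
have : be * (x * ga) <= be * be by apply: ler_wpM2l; lra.
by move=> *; apply/andP; split; nra.
Qed.

Let pair_cut_num : be * pair_cut - al = - ga * pair_cut + be.
Proof.
have : pair_cut * (ga + be) = be + al by rewrite /pair_cut divfK // gt_eqF.
lra.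
Qed.

Let pair_cut_den : - ga * pair_cut + be != 0.
Proof.
by have /andP[+ _] := pair_denomL (ltW lt_pair_cut) (lexx _); rewrite lt0r => /andP[].
Qed.

Lemma mobL_left : mob (be, - al, - ga, be) (al / be) = 0.
Proof. by rewrite /= [be * _]mulrC divfK ?gt_eqF // addrN mul0r. Qed.

Lemma mobL_right : mob (be, - al, - ga, be) pair_cut = 1.
Proof. by rewrite /= pair_cut_num divff. Qed.

Lemma mobR_left : mob (- ga, be, be, - al) pair_cut = 1.
Proof. by rewrite /= pair_cut_num divff. Qed.

Lemma mobR_right : mob (- ga, be, be, - al) (be / ga) = 0.
Proof. by rewrite /= mulNr [ga * _]mulrC divfK ?gt_eqF // addNr mul0r. Qed.

End BranchPair.

Lemma natr_pred (R : pzRingType) k : (0 < k)%N -> k%:R - 1 = k.-1%:R :> R.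
Proof. by move=> k0; rewrite -[in LHS](prednK k0) -natr1 addrK. Qed.

Lemma foldr_branches (T : eqType) (A : Type) (r : seq T) (f : T -> option A) x0 v :
  (forall k, k \in r -> f k = None \/ f k = Some v) ->
  (exists2 k, k \in r & f k = Some v) ->
  foldr (fun k acc => if f k is Some y then y else acc) x0 r = v.
Proof.
elim: r => [|a r IH] f_r [k kr fk] //=.
have [] := f_r a (mem_head _ _) => fa; rewrite fa //.
apply: IH => [k' k'r|]; first by apply: f_r; rewrite in_cons k'r orbT.
by move: kr fk; rewrite in_cons => /orP[/eqP -> | kr fk]; [rewrite fa | exists k].
Qed.

(* For [q = 2h + 1], the element [k] of [K] contributes the pieces [2(2h - k)],
   where [F_q] is [g_k], and [2(2h - k) + 1], where it is [Q g_k]; the cuts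
   increase from [0] to [1] as [k] decreases from [2h] to [h + 1]. *)
Section FareyPieces.
Variables (R : realType) (h : nat).
Hypothesis h_gt0 : (0 < h)%N.
Local Notation q := (2 * h).+1.

Let q_gt1 : (1 < q)%N. Proof. by move: h_gt0; lia. Qed.

Definition snat (n : nat) : R := sq q n%:R.

Lemma snat_ge1 n : (0 < n)%N -> (n <= 2 * h)%N -> 1 <= snat n.
Proof.
move=> n0 nq; apply: sq_ge1 => //; first by rewrite ler1n.
by rewrite -natr1 addrK ler_nat.
Qed.

Lemma snat_ge0 n : (n <= q)%N -> 0 <= snat n.
Proof. by move=> nq; apply: sq_ge0 => //; rewrite ler_nat. Qed.

Lemma snat_cassini k : (0 < k)%N -> snat k ^+ 2 - snat k.+1 * snat k.-1 = 1.
Proof. by move=> k0; have := sq_cassini q_gt1 (k%:R : R); rewrite natr1 natr_pred. Qed.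

Lemma gkE k : (0 < k)%N -> gk R q k = (snat k, - snat k.+1, - snat k.-1, snat k).
Proof. by move=> k0; rewrite /gk natr_pred. Qed.

Definition branch_k i := (2 * h - i %/ 2)%N.
Definition al i := snat (branch_k i).+1.
Definition be i := snat (branch_k i).
Definition ga i := snat (branch_k i).-1.

Definition cut i := if odd i then pair_cut (al i) (be i) (ga i) else al i / be i.

Definition piece_mob i : R * R * R * R :=
  if odd i then (- ga i, be i, be i, - al i) else (be i, - al i, - ga i, be i).

Lemma branch_pair_hyps i : (i < 2 * h)%N ->
  [/\ 1 <= be i, 1 <= ga i, 0 <= al i & be i ^+ 2 - al i * ga i = 1].
Proof.
move=> i2h; rewrite /be /ga /al /branch_k; split.
- by apply: snat_ge1; lia.
- by apply: snat_ge1; lia.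
- by apply: snat_ge0; lia.
- by apply: snat_cassini; lia.
Qed.

Lemma branch_k_even i : ~~ odd i -> branch_k i.+1 = branch_k i.
Proof. by move=> /negbTE ev; have := modn2 i; rewrite ev /branch_k; lia. Qed.

Lemma branch_k_odd i : odd i -> (i < 2 * h)%N -> (branch_k i.+1).+1 = branch_k i.
Proof. by move=> od i2h; have := modn2 i; rewrite od /branch_k; lia. Qed.

Lemma cut_even i : ~~ odd i ->
  cut i = al i / be i /\ cut i.+1 = pair_cut (al i) (be i) (ga i).
Proof. by move=> ev; rewrite /cut /= (negbTE ev) /al /be /ga branch_k_even. Qed.

Lemma cut_odd i : odd i -> (i < 2 * h)%N ->
  cut i = pair_cut (al i) (be i) (ga i) /\ cut i.+1 = be i / ga i.
Proof. by move=> od i2h; rewrite /cut /= od /al /be /ga -(branch_k_odd od i2h). Qed.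

Lemma cut_lt i : (i < 2 * h)%N -> cut i < cut i.+1.
Proof.
move=> i2h; have [? ? ? ?] := branch_pair_hyps i2h.
have [od|ev] := boolP (odd i).
  by have [-> ->] := cut_odd od i2h; exact: pair_cut_lt.
by have [-> ->] := cut_even ev; exact: lt_pair_cut.
Qed.

Lemma piece_mob_cut i : (i < 2 * h)%N ->
  mob (piece_mob i) (cut i) = (odd i)%:R /\ mob (piece_mob i) (cut i.+1) = (odd i.+1)%:R.
Proof.
move=> i2h; have [? ? ? ?] := branch_pair_hyps i2h.
rewrite /piece_mob /=; have [od|ev] := boolP (odd i) => /=.
  by have [-> ->] := cut_odd od i2h; split; [exact: mobR_left | exact: mobR_right].
by have [-> ->] := cut_even ev; split; [exact: mobL_left | exact: mobL_right].
Qed.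

Lemma piece_mob_shape i : (i < 2 * h)%N -> exists A B C D, [/\ piece_mob i = (A, B, C, D),
  exists2 sg : R, sg = 1 \/ sg = -1 & A * D - B * C = sg,
  1 <= `|C| & forall x, cut i <= x -> x <= cut i.+1 -> 0 < C * x + D <= 1].
Proof.
move=> i2h; have [be1 ga1 al0 det] := branch_pair_hyps i2h.
rewrite /piece_mob; have [od|ev] := boolP (odd i).
  have [-> ->] := cut_odd od i2h.
  exists (- ga i), (be i), (be i), (- al i); split => //.
  - by exists (-1); [right | rewrite mulrNN; lra].
  - by rewrite ger0_norm //; lra.
  - by move=> x; apply: pair_denomR.
have [-> ->] := cut_even ev.
exists (be i), (- al i), (- ga i), (be i); split => //.
- by exists 1; [left | rewrite mulrNN; lra].
- by rewrite normrN ger0_norm //; lra.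
- by move=> x; apply: pair_denomL.
Qed.

Lemma branchE k x : (h < k)%N -> (k <= 2 * h)%N ->
  let i := (2 * (2 * h - k))%N in
  branch q x k = if cut i <= x <= cut i.+1 then Some (mob (piece_mob i) x)
    else if cut i.+1 <= x <= cut i.+2 then Some (mob (piece_mob i.+1) x) else None.
Proof.
move=> hk k2h i.
have ev : ~~ odd i by rewrite /i oddM.
have od1 : odd i.+1 by rewrite /= ev.
have ki : branch_k i = k by rewrite /branch_k /i; lia.
have [ci ci1] := cut_even ev.
have [_ ci2] := cut_odd od1 (ltac:(rewrite /i; lia) : (i.+1 < 2 * h)%N).
rewrite ci ci1 ci2 /piece_mob od1 (negbTE ev) /al /be /ga branch_k_even // ki.
rewrite /branch gkE; last by lia.
rewrite /= !opprK !mulr0 !mulr1 !add0r /pair_cut.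
have flip (a b c : R) : (- a - b) / (- b - c) = (b + a) / (c + b).
  by rewrite -!opprD invrN mulrNN [a + b]addrC [b + c]addrC.
by rewrite flip invrN mulrNN.
Qed.

Lemma cut_le i j : (i <= j)%N -> (j <= 2 * h)%N -> cut i <= cut j.
Proof. exact: (t_le (M := 2 * h) cut_lt). Qed.

Lemma piece_mob_agree i j x : (i < 2 * h)%N -> (j < 2 * h)%N ->
  cut i <= x <= cut i.+1 -> cut j <= x <= cut j.+1 ->
  mob (piece_mob i) x = mob (piece_mob j) x.
Proof.
wlog ij : i j / (i <= j)%N.
  by move=> agree i2h j2h xi xj; case: (leqP i j) => [|/ltnW] ij; last symmetry; apply: agree.
move=> i2h j2h /andP[xi1 xi2] /andP[xj1 xj2].
case: (ltngtP i j) ij => // [ij _|-> //].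
have [ij1|] := ltnP i.+1 j.
  by have := cut_le ij1 (ltnW j2h); have := cut_lt (ltn_trans ij1 j2h); lra.
move=> ji; have jE : j = i.+1 by lia.
subst j; have -> : x = cut i.+1 by lra.
by have [_ ->] := piece_mob_cut i2h; have [-> _] := piece_mob_cut j2h.
Qed.

Lemma mem_Kset k : (k \in Kset q) = (h < k <= 2 * h)%N.
Proof.
rewrite /Kset mem_iota.
have -> : (q.+1 %/ 2 = h.+1)%N by lia.
by have -> : (h.+1 + ((2 * h).+1.-1 - h.+1).+1 = (2 * h).+1)%N by lia.
Qed.

Lemma branch_piece k x : (h < k)%N -> (k <= 2 * h)%N ->
  branch q x k = None \/ exists2 j, (j < 2 * h)%N /\ cut j <= x <= cut j.+1 &
    branch q x k = Some (mob (piece_mob j) x).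
Proof.
move=> hk k2h; rewrite (branchE x hk k2h) /=.
case: ifP => [xi|_]; first by right; exists (2 * (2 * h - k))%N => //; split => //; lia.
case: ifP => [xi|_]; last by left.
by right; exists (2 * (2 * h - k)).+1%N => //; split => //; lia.
Qed.

Lemma branch_on_piece i x : (i < 2 * h)%N -> cut i <= x <= cut i.+1 ->
  branch q x (branch_k i) != None.
Proof.
move=> i2h xi.
have hk : (h < branch_k i)%N by rewrite /branch_k; lia.
have k2h : (branch_k i <= 2 * h)%N by rewrite /branch_k; lia.
rewrite (branchE x hk k2h) /=.
set i0 := (2 * (2 * h - branch_k i))%N.
have := modn2 i; case: ifP => // /negbT not_i0.
case: (odd i) => i_mod2.
- have iE : i = i0.+1 by move: i_mod2; rewrite /i0 /branch_k; lia.
  by rewrite -iE xi.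
- have iE : i = i0 by move: i_mod2; rewrite /i0 /branch_k; lia.
  by move: not_i0; rewrite -iE xi.
Qed.

Lemma cut0 : cut 0 = 0.
Proof.
rewrite /cut /= /al /snat /branch_k.
have -> : (2 * h - 0 %/ 2).+1 = q by lia.
by rewrite sq_q // mul0r.
Qed.

Lemma cut_last : cut (2 * h) = 1.
Proof.
rewrite /cut oddM /= /al /be /branch_k.
have -> : (2 * h - (2 * h) %/ 2)%N = h by lia.
have -> : snat h.+1 = snat h.
  by rewrite /snat -sq_sym // -natrB; [congr (sq _ _%:R); lia | lia].
by apply: divff; rewrite gt_eqF // (lt_le_trans ltr01) // snat_ge1 //; lia.
Qed.

Lemma Fq_piece i x : (i < 2 * h)%N -> cut i <= x <= cut i.+1 ->
  Fq q x = mob (piece_mob i) x.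
Proof.
move=> i2h xi; have /andP[xi1 xi2] := xi.
have x01 : 0 <= x <= 1.
  have := cut_le (leq0n i) (ltnW i2h); have := cut_le i2h (leqnn _).
  by rewrite cut0 cut_last => ? ?; apply/andP; split; lra.
have hk : (h < branch_k i)%N by rewrite /branch_k; lia.
have k2h : (branch_k i <= 2 * h)%N by rewrite /branch_k; lia.
rewrite /Fq x01; apply: foldr_branches.
  move=> k; rewrite mem_Kset => /andP[hk' k2h'].
  case: (branch_piece x hk' k2h') => [->|[j [j2h xj] ->]]; first by left.
  by right; rewrite (piece_mob_agree j2h i2h xj xi).
exists (branch_k i); first by rewrite mem_Kset hk k2h.
case: (branch_piece x hk k2h) => [noneE|[j [j2h xj] ->]].
  by move: (branch_on_piece i2h xi); rewrite noneE.
by rewrite (piece_mob_agree j2h i2h xj xi).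
Qed.

Lemma Fq_expanding i : (i < 2 * h)%N -> exists2 sg : R, sg = 1 \/ sg = -1 &
  forall x y, cut i <= x -> x <= y -> y <= cut i.+1 ->
    (y - x) * (1 + (y - x)) <= sg * (Fq q y - Fq q x).
Proof.
move=> i2h; have [A [B [C [D [mobE [sg sgE det] C1 den]]]]] := piece_mob_shape i2h.
exists sg => // x y ix xy yi.
have xi : cut i <= x <= cut i.+1 by apply/andP; split; lra.
have yi' : cut i <= y <= cut i.+1 by apply/andP; split; lra.
rewrite (Fq_piece i2h xi) (Fq_piece i2h yi') mobE.
by apply: mob_expansion => //; apply: den; lra.
Qed.

Lemma Fq_ivt i : (i < 2 * h)%N -> forall x y v, cut i <= x -> x <= y -> y <= cut i.+1 ->
  (Fq q x <= v <= Fq q y) \/ (Fq q y <= v <= Fq q x) -> exists2 z, x <= z <= y & Fq q z = v.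
Proof.
move=> i2h x y v ix xy yi.
have [A [B [C [D [mobE _ _ den]]]]] := piece_mob_shape i2h.
have onpiece z : x <= z <= y -> cut i <= z <= cut i.+1.
  by move=> /andP[? ?]; apply/andP; split; lra.
have xin : x <= x <= y by rewrite lexx xy.
have yin : x <= y <= y by rewrite lexx xy.
rewrite (Fq_piece i2h (onpiece _ xin)) (Fq_piece i2h (onpiece _ yin)) mobE => v_between.
have den_neq0 z : x <= z <= y -> C * z + D != 0.
  by move=> /onpiece/andP[z1 z2]; have /andP[+ _] := den z z1 z2; exact: lt0r_neq0.
have [z zxy <-] := mob_ivt xy den_neq0 v_between.
by exists z => //; rewrite (Fq_piece i2h (onpiece _ zxy)) mobE.
Qed.

Lemma Fq_cut i : (i <= 2 * h)%N -> Fq q (cut i) = 0 \/ Fq q (cut i) = 1.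
Proof.
have nat_bool (b : bool) : b%:R = 0 :> R \/ b%:R = 1 :> R by case: b; [right | left].
move=> i2h; have [ilt|ige] := ltnP i (2 * h).
  have ii : cut i <= cut i <= cut i.+1 by rewrite lexx ltW // cut_lt.
  by rewrite (Fq_piece ilt ii); have [-> _] := piece_mob_cut ilt.
have -> : i = (2 * h).-1.+1 by lia.
have j2h : ((2 * h).-1 < 2 * h)%N by lia.
have jj : cut (2 * h).-1 <= cut (2 * h).-1.+1 <= cut (2 * h).-1.+1.
  by rewrite lexx ltW // cut_lt.
by rewrite (Fq_piece j2h jj); have [_ ->] := piece_mob_cut j2h.
Qed.

Lemma Fq_mixing (B1 B2 : set R) :
  open_in_unit B1 -> open_in_unit B2 -> B1 !=set0 -> B2 !=set0 ->
  exists N, forall n, (N <= n)%N -> (iter n (Fq q) @` B1) `&` B2 !=set0.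
Proof.
have h2_gt0 : (0 < 2 * h)%N by rewrite muln_gt0.
exact: (piecewise_expanding_mixing h2_gt0 cut0 cut_last cut_lt Fq_expanding Fq_ivt Fq_cut).
Qed.

End FareyPieces.

Theorem proposition2p2 (R : realType) (q : nat) (hodd : odd q) (hq : (3 <= q)%N)
  (B1 B2 : set R) :
  open_in_unit B1 -> open_in_unit B2 -> B1 !=set0 -> B2 !=set0 ->
  exists N : nat, forall n : nat, (N <= n)%N ->
    (iter n (Fq q) @` B1) `&` B2 !=set0.
Proof.
have -> : q = (2 * q./2).+1 by rewrite -[in LHS](odd_double_half q) hodd -mul2n add1n.
by apply: Fq_mixing; lia.
Qed.
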